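(* Let $(X,\le)$ be a globally hyperbolic poset. The set of closed intervals $\mathbf{I}X=\{[a,b]: a,b\in X,\ a\le b\}$, ordered by reverse inclusion ($[a,b]\sqsubseteq[c,d]$ iff $[c,d]\subseteq[a,b]$), is a continuous dcpo (domain), and its way-below relation is given by $[a,b]\ll[c,d]$ iff $a\ll c$ and $d\ll b$ (the latter computed in $(X,\le)$). The space $X$ (with its interval topology) has a countable basis iff $\mathbf{I}X$ is $\omega$-continuous. Finally, $\max(\mathbf{I}X)$, with the relative Scott topology inherited from $\mathbf{I}X$, is homeomorphic to $X$ with its interval topology (via $x\mapsto[x,x]$).
   Context: For a poset $(P,\sqsubseteq)$: a nonempty $S\subseteq P$ is directed if any two elements of $S$ have an upper bound in $S$, and filtered if any two have a lower bound in $S$; $\bigsqcup S$, $\bigwedge S$ denote supremum and infimum when they exist. For $x,y\in P$, $x\ll y$ iff for every directed $S\subseteq P$ that has a supremum, $y\sqsubseteq\bigsqcup S$ implies $x\sqsubseteq s$ for some $s\in S$. Put $\Downarrow x=\{a: a\ll x\}$, $\Uparrow x=\{a: x\ll a\}$. A basis of $P$ is a subset $B$ such that for every $x$, $B\cap\Downarrow x$ contains a directed set with supremum $x$; $P$ is continuous if it has a basis and $\omega$-continuous if it has a countable basis. A dcpo is a poset in which every directed set has a supremum; a continuous dcpo (domain) is a continuous poset that is a dcpo. $\max(P)=\{x: \text{there is no } y\neq x \text{ with } x\sqsubseteq y\}$. The Scott topology consists of upper sets $U$ such that for each directed $S$ with a supremum, $\bigsqcup S\in U$ implies $S\cap U\neq\emptyset$.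 A continuous poset $P$ is bicontinuous if (1) for all $x,y$: $x\ll y$ iff for every filtered $S\subseteq P$ having an infimum, $\bigwedge S\sqsubseteq x$ implies $s\sqsubseteq y$ for some $s\in S$; and (2) for every $x$, $\Uparrow x$ is filtered with infimum $x$. On a bicontinuous poset the sets $(a,b)=\{x:a\ll x\ll b\}$ form a basis for the interval topology. A globally hyperbolic poset is a bicontinuous poset $(X,\le)$ in which every closed interval $[a,b]=\{x:a\le x\le b\}$ is compact in the interval topology. *)

From Stdlib Require Import List.
Set Implicit Arguments.

Section Order.
Variable P : Type.
Variable le : P -> P -> Prop.

Record is_poset : Prop := {
  po_refl : forall x, le x x;
  po_antisym : forall x y, le x y -> le y x -> x = y;
  po_trans : forall x y z, le x y -> le y z -> le x z }.

Definition directed (S : P -> Prop) : Prop :=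
  (exists x, S x) /\
  forall x y, S x -> S y -> exists z, S z /\ le x z /\ le y z.

Definition filtered (S : P -> Prop) : Prop :=
  (exists x, S x) /\
  forall x y, S x -> S y -> exists z, S z /\ le z x /\ le z y.

Definition is_sup (S : P -> Prop) (s : P) : Prop :=
  (forall x, S x -> le x s) /\ (forall u, (forall x, S x -> le x u) -> le s u).

Definition is_inf (S : P -> Prop) (s : P) : Prop :=
  (forall x, S x -> le s x) /\ (forall u, (forall x, S x -> le u x) -> le u s).

Definition way_below (x y : P) : Prop :=
  forall S s, directed S -> is_sup S s -> le y s -> exists d, S d /\ le x d.

Definition is_basis (B : P -> Prop) : Prop :=
  forall x, exists S, (forall d, S d -> B d /\ way_below d x) /\
                      directed S /\ is_sup S x.

Definition countable_set (B : P -> Prop) : Prop :=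
  exists f : P -> nat, forall x y, B x -> B y -> f x = f y -> x = y.

Definition continuous_poset : Prop := exists B, is_basis B.

Definition omega_continuous : Prop := exists B, is_basis B /\ countable_set B.

Definition dcpo : Prop := forall S, directed S -> exists s, is_sup S s.

Definition domain : Prop := continuous_poset /\ dcpo.

Definition maximal (x : P) : Prop := forall y, le x y -> y = x.

Definition scott_open (U : P -> Prop) : Prop :=
  (forall x y, U x -> le x y -> U y) /\
  (forall S s, directed S -> is_sup S s -> U s -> exists d, S d /\ U d).

Definition bicontinuous : Prop :=
  continuous_poset /\
  (forall x y, way_below x y <->
     (forall S i, filtered S -> is_inf S i -> le i x -> exists s, S s /\ le s y)) /\
  (forall x, filtered (fun a => way_below x a) /\ is_inf (fun a => way_below x a) x).

Definition interval_open (U : P -> Prop) : Prop :=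
  forall x, U x -> exists a b, way_below a x /\ way_below x b /\
    (forall y, way_below a y -> way_below y b -> U y).

Definition closed_interval (a b : P) : P -> Prop := fun x => le a x /\ le x b.

End Order.
Arguments directed {P} le S.
Arguments filtered {P} le S.
Arguments is_sup {P} le S s.
Arguments is_inf {P} le S s.
Arguments way_below {P} le x y.
Arguments is_basis {P} le B.
Arguments countable_set {P} B.
Arguments continuous_poset {P} le.
Arguments omega_continuous {P} le.
Arguments dcpo {P} le.
Arguments domain {P} le.
Arguments maximal {P} le x.
Arguments scott_open {P} le U.
Arguments bicontinuous {P} le.
Arguments interval_open {P} le U.
Arguments closed_interval {P} le a b x.
Arguments is_poset {P} le.

Definition compact_in {T : Type} (opn : (T -> Prop) -> Prop) (K : T -> Prop) : Prop :=
  forall F : (T -> Prop) -> Prop,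
    (forall U, F U -> opn U) ->
    (forall x, K x -> exists U, F U /\ U x) ->
    exists l : list (T -> Prop), (forall U, In U l -> F U) /\
      (forall x, K x -> exists U, In U l /\ U x).

Definition second_countable {T : Type} (opn : (T -> Prop) -> Prop) : Prop :=
  exists B : nat -> T -> Prop, (forall n, opn (B n)) /\
    forall U x, opn U -> U x -> exists n, B n x /\ forall y, B n y -> U y.

Definition globally_hyperbolic {X : Type} (le : X -> X -> Prop) : Prop :=
  is_poset le /\ bicontinuous le /\
  forall a b, compact_in (interval_open le) (closed_interval le a b).

(* the interval poset IX: pairs (a,b) with a <= b, standing for [a,b] *)
Definition IX {X : Type} (le : X -> X -> Prop) : Type := { p : X * X | le (fst p) (snd p) }.

Definition ilo {X : Type} {le : X -> X -> Prop} (i : IX le) : X := fst (proj1_sig i).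
Definition ihi {X : Type} {le : X -> X -> Prop} (i : IX le) : X := snd (proj1_sig i).

Definition IX_le {X : Type} (le : X -> X -> Prop) (i j : IX le) : Prop :=
  forall x, closed_interval le (ilo j) (ihi j) x -> closed_interval le (ilo i) (ihi i) x.

Definition singleton_interval {X : Type} {le : X -> X -> Prop} (H : is_poset le) (x : X)
  : IX le := exist _ (x, x) (po_refl H x).
Arguments IX_le {X} le i j.

(* Compactness of the closed intervals gives suprema of directed sets bounded above: the
   complements of [↑l] and [↓u] are open in the interval topology, so for a directed [L] below
   [b] the closed sets [↑l] (l in L) and [↓u] (u an upper bound of L) have the finite
   intersection property in the compact [[l0, b]], and a common point is [sup L].  Bicontinuity
   says that the way-below relation of the dual order is the reverse of [<<], so everything
   dualizes and bounded filtered sets have infima too.  Hence a directed family of intervals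
   [[a_k, b_k]] has supremum [[sup a_k, inf b_k]], which yields the description of [<<] on [IX]
   and its continuity.  A countable basis of [X] provides a countable set that is dense for
   [<<]; the intervals with endpoints in it form a countable basis of [IX].  Conversely the open
   intervals [(lo d, hi d)], for [d] in a countable basis of [IX], form a basis of [X]. *)

From Stdlib Require Import List Classical ClassicalEpsilon ProofIrrelevance
  FunctionalExtensionality PropExtensionality Cantor.

Definition dual {X : Type} (le : X -> X -> Prop) : X -> X -> Prop := fun x y => le y x.

Definition way_below_dense {X : Type} (le : X -> X -> Prop) (C : X -> Prop) : Prop :=
  forall a c, way_below le a c -> exists e, C e /\ way_below le a e /\ way_below le e c.

Section Poset.
Context {X : Type} {le : X -> X -> Prop}.
Hypothesis le_po : is_poset le.
Local Notation wb := (way_below le).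
Let refl := po_refl le_po.
Let trans {x y z : X} (Hxy : le x y) (Hyz : le y z) : le x z := po_trans le_po x y z Hxy Hyz.

Lemma is_poset_dual : is_poset (dual le).
Proof.
  split; unfold dual.
  - exact refl.
  - intros x y Hxy Hyx. exact (po_antisym le_po x y Hyx Hxy).
  - intros x y z Hxy Hyz. exact (trans Hyz Hxy).
Qed.

Lemma is_sup_unique {S s t} : is_sup le S s -> is_sup le S t -> s = t.
Proof.
  intros [Hs Hs_least] [Ht Ht_least].
  apply (po_antisym le_po); [apply Hs_least | apply Ht_least]; assumption.
Qed.

Lemma way_below_le {x y} : wb x y -> le x y.
Proof.
  intros Hxy. destruct (Hxy (fun z => z = y) y) as [d [-> Hxd]]; auto.
  - split; [exists y; reflexivity|]. intros a b -> ->. exists y; auto.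
  - split; [intros z ->; apply refl | intros u Hu; apply Hu; reflexivity].
Qed.

Lemma way_below_le_trans {x y z} : wb x y -> le y z -> wb x z.
Proof. intros Hxy Hyz S s HS Hs Hzs. apply (Hxy S s HS Hs). exact (trans Hyz Hzs). Qed.

Lemma le_way_below_trans {x y z} : le x y -> wb y z -> wb x z.
Proof.
  intros Hxy Hyz S s HS Hs Hzs. destruct (Hyz S s HS Hs Hzs) as [d [Hd Hyd]].
  exists d; split; [exact Hd | exact (trans Hxy Hyd)].
Qed.

Lemma basis_way_below {B x y} : is_basis le B -> wb x y -> exists d, B d /\ le x d /\ wb d y.
Proof.
  intros HB Hxy. destruct (HB y) as [S [HSB [HS Hsup]]].
  destruct (Hxy S y HS Hsup (refl y)) as [d [Hd Hxd]].
  destruct (HSB d Hd) as [Bd Hdy]. eauto.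
Qed.

Section Continuous.
Hypothesis le_cont : continuous_poset le.

Lemma way_below_directed_sup x : directed le (fun a => wb a x) /\ is_sup le (fun a => wb a x) x.
Proof.
  destruct le_cont as [B HB]. destruct (HB x) as [D [HDB [[[d0 Hd0] HDdir] [_ HDleast]]]].
  split; [split|split].
  - exists d0. apply HDB, Hd0.
  - intros a b Ha Hb.
    assert (HD : directed le D) by (split; [exists d0|]; assumption).
    assert (HDsup : is_sup le D x) by (split; [intros d Hd; apply way_below_le, HDB, Hd | exact HDleast]).
    destruct (Ha D x HD HDsup (refl x)) as [d1 [Hd1 Had1]].
    destruct (Hb D x HD HDsup (refl x)) as [d2 [Hd2 Hbd2]].
    destruct (HDdir d1 d2 Hd1 Hd2) as [d [Hd [H1 H2]]].
    exists d. split; [apply HDB, Hd | split; eauto].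
  - intros a. apply way_below_le.
  - intros u Hu. apply HDleast. intros d Hd. apply Hu, HDB, Hd.
Qed.

Lemma exists_way_below x : exists a, wb a x.
Proof. destruct (way_below_directed_sup x) as [[[a Ha] _] _]. eauto. Qed.

(* The approximants of the approximants of c form a directed set with supremum c. *)
Lemma way_below_interpolate {a c} : wb a c -> exists z, wb a z /\ wb z c.
Proof.
  intros Hac. pose (D := fun e => exists d, wb d c /\ wb e d).
  destruct (way_below_directed_sup c) as [[[d0 Hd0] Hdir] [_ Hleast]].
  assert (HD : directed le D).
  { split.
    - destruct (exists_way_below d0) as [e He]. exists e, d0; auto.
    - intros e1 e2 [d1 [Hd1 He1]] [d2 [Hd2 He2]].
      destruct (Hdir d1 d2 Hd1 Hd2) as [d [Hd [H1 H2]]].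
      destruct (proj2 (proj1 (way_below_directed_sup d)) e1 e2
                  (way_below_le_trans He1 H1) (way_below_le_trans He2 H2)) as [f [Hf Hef]].
      exists f. split; [exists d; auto | exact Hef]. }
  assert (HDsup : is_sup le D c).
  { split.
    - intros e [d [Hd He]]. exact (trans (way_below_le He) (way_below_le Hd)).
    - intros u Hu. apply Hleast. intros d Hd.
      apply (proj2 (proj2 (way_below_directed_sup d))). intros e He. apply Hu. exists d; auto. }
  destruct (Hac D c HD HDsup (refl c)) as [e [[d [Hd Hed]] Hae]].
  exists d. split; [exact (le_way_below_trans Hae Hed) | exact Hd].
Qed.

Lemma way_below_dense_all : way_below_dense le (fun _ => True).
Proof. intros a c Hac. destruct (way_below_interpolate Hac) as [z Hz]. eauto. Qed.

Lemma open_interval_open a b : interval_open le (fun y => wb a y /\ wb y b).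
Proof.
  intros y [Hay Hyb].
  destruct (way_below_interpolate Hay) as [a' [Haa' Ha'y]].
  destruct (way_below_interpolate Hyb) as [b' [Hyb' Hb'b]].
  exists a', b'. split; [exact Ha'y | split; [exact Hyb' |]].
  intros z Ha'z Hzb'. split.
  - exact (le_way_below_trans (way_below_le Haa') Ha'z).
  - exact (way_below_le_trans Hzb' (way_below_le Hb'b)).
Qed.

Lemma way_below_dense_of_separable {C} :
  (forall U x, interval_open le U -> U x -> exists c, C c /\ U c) -> way_below_dense le C.
Proof.
  intros HC a c Hac. destruct (way_below_interpolate Hac) as [z Hz].
  destruct (HC _ z (open_interval_open a c) Hz) as [e [Ce He]]. eauto.
Qed.

Lemma way_below_dense_directed_sup {C} c : way_below_dense le C ->
  directed le (fun e => C e /\ wb e c) /\ is_sup le (fun e => C e /\ wb e c) c.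
Proof.
  intros HC. destruct (way_below_directed_sup c) as [[[d0 Hd0] Hdir] [_ Hleast]].
  split; [split|split].
  - destruct (HC d0 c Hd0) as [e [Ce [_ Hec]]]. eauto.
  - intros e1 e2 [_ H1] [_ H2]. destruct (Hdir e1 e2 H1 H2) as [d [Hd [H1d H2d]]].
    destruct (HC d c Hd) as [e [Ce [Hde Hec]]].
    exists e. split; [auto | split].
    + exact (trans H1d (way_below_le Hde)).
    + exact (trans H2d (way_below_le Hde)).
  - intros e [_ Hec]. exact (way_below_le Hec).
  - intros u Hu. apply Hleast. intros d Hd. destruct (HC d c Hd) as [e [Ce [Hde Hec]]].
    exact (trans (way_below_le Hde) (Hu e (conj Ce Hec))).
Qed.

Lemma scott_open_way_above x : scott_open le (wb x).
Proof.
  split.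
  - intros y z Hxy Hyz. exact (way_below_le_trans Hxy Hyz).
  - intros S s HS Hs Hxs. destruct (way_below_interpolate Hxs) as [z [Hxz Hzs]].
    destruct (Hzs S s HS Hs (refl s)) as [d [Hd Hzd]].
    exists d. split; [exact Hd | exact (way_below_le_trans Hxz Hzd)].
Qed.

End Continuous.

Section Bicontinuous.
Hypothesis le_bc : bicontinuous le.

Lemma way_below_dual : way_below (dual le) = dual (way_below le).
Proof.
  destruct le_bc as [_ [Hwb _]].
  apply functional_extensionality; intro x; apply functional_extensionality; intro y.
  apply propositional_extensionality. symmetry. exact (Hwb y x).
Qed.

Lemma bicontinuous_dual : bicontinuous (dual le).
Proof.
  destruct le_bc as [Hcont [_ Hup]].
  unfold bicontinuous, continuous_poset, is_basis. rewrite way_below_dual.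
  split; [|split].
  - exists (fun _ => True). intros x. exists (wb x). split; [|exact (Hup x)].
    intros d Hd. split; [exact I | exact Hd].
  - intros x y. apply iff_refl.
  - intros x. exact (way_below_directed_sup Hcont x).
Qed.

Lemma interval_open_dual : interval_open (dual le) = interval_open le.
Proof.
  apply functional_extensionality; intro U. apply propositional_extensionality.
  unfold interval_open. rewrite way_below_dual. unfold dual.
  split; intros HU x Ux; destruct (HU x Ux) as [a [b [Hxa [Hbx Hab]]]];
    exists b, a; repeat split; auto.
Qed.

Lemma way_below_dense_dual {C} : way_below_dense le C -> way_below_dense (dual le) C.
Proof.
  intros HC. unfold way_below_dense. rewrite way_below_dual. unfold dual.
  intros a c Hca. destruct (HC c a Hca) as [e [Ce [Hce Hea]]]. eauto.
Qed.

(* [x] is the infimum of its way-above set, so some [b >> x] is already not above [y]. *)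
Lemma interval_open_not_ge y : interval_open le (fun x => ~ le y x).
Proof.
  destruct le_bc as [Hcont [_ Hup]].
  intros x Hyx.
  assert (Hb : exists b, wb x b /\ ~ le y b).
  { apply NNPP; intro Hnone. apply Hyx, (proj2 (proj2 (Hup x))).
    intros b Hxb. apply NNPP; intro Hyb. apply Hnone; eauto. }
  destruct Hb as [b [Hxb Hyb]]. destruct (exists_way_below Hcont x) as [a Hax].
  exists a, b. split; [exact Hax | split; [exact Hxb |]].
  intros z _ Hzb Hyz. exact (Hyb (trans Hyz (way_below_le Hzb))).
Qed.

End Bicontinuous.
End Poset.

Lemma interval_open_not_le {X : Type} {le : X -> X -> Prop} y :
  is_poset le -> bicontinuous le -> interval_open le (fun x => ~ le x y).
Proof.
  intros Hpo Hbc. rewrite <- (interval_open_dual Hbc).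
  exact (interval_open_not_ge (is_poset_dual Hpo) (bicontinuous_dual Hpo Hbc) y).
Qed.

Lemma way_below_dense_filtered_inf {X : Type} {le : X -> X -> Prop} {C} d :
  is_poset le -> bicontinuous le -> way_below_dense le C ->
  filtered le (fun y => C y /\ way_below le d y) /\ is_inf le (fun y => C y /\ way_below le d y) d.
Proof.
  intros Hpo Hbc HC.
  pose proof (way_below_dense_directed_sup (is_poset_dual Hpo)
                (proj1 (bicontinuous_dual Hpo Hbc)) d (way_below_dense_dual Hbc HC)) as H.
  rewrite (way_below_dual Hbc) in H. exact H.
Qed.

Lemma closed_interval_dual {X : Type} {le : X -> X -> Prop} a b :
  closed_interval (dual le) a b = closed_interval le b a.
Proof.
  apply functional_extensionality; intro x. apply propositional_extensionality.
  unfold closed_interval, dual. tauto.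
Qed.

Lemma compact_fip {T J : Type} {opn : (T -> Prop) -> Prop} {K : T -> Prop}
    (A : J -> Prop) (U : J -> T -> Prop) :
  compact_in opn K -> (forall j, A j -> opn (U j)) ->
  (forall js, (forall j, In j js -> A j) -> exists x, K x /\ forall j, In j js -> ~ U j x) ->
  exists x, K x /\ forall j, A j -> ~ U j x.
Proof.
  intros HK HU Hfin. apply NNPP; intro Hnone.
  destruct (HK (fun V => exists j, A j /\ V = U j)) as [l [Hl Hcov]].
  - intros V [j [Aj ->]]. exact (HU j Aj).
  - intros x Kx. apply NNPP; intro Hx. apply Hnone. exists x. split; [exact Kx|].
    intros j Aj Ujx. apply Hx. exists (U j). split; [exists j; auto | exact Ujx].
  - assert (Hjs : exists js, (forall j, In j js -> A j) /\
                             forall V, In V l -> exists j, In j js /\ V = U j).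
    { clear Hcov. induction l as [|V l IH].
      - exists nil. split; intros ? [].
      - destruct IH as [js [Hjs HV]]; [intros W HW; apply Hl; now right|].
        destruct (Hl V (or_introl eq_refl)) as [j [Aj ->]].
        exists (j :: js). split.
        + intros j' [<- | Hj']; auto.
        + intros W [<- | HW]; [exists j; simpl; auto|].
          destruct (HV W HW) as [j' [Hj' ->]]. exists j'; simpl; auto. }
    destruct Hjs as [js [Hjs HV]]. destruct (Hfin js Hjs) as [x [Kx Hx]].
    destruct (Hcov x Kx) as [V [HVl Vx]]. destruct (HV V HVl) as [j [Hj ->]].
    exact (Hx j Hj Vx).
Qed.

Section BoundedSup.
Context {X : Type} {le : X -> X -> Prop}.
Hypotheses (le_po : is_poset le) (le_bc : bicontinuous le)
  (le_cpt : forall a b, compact_in (interval_open le) (closed_interval le a b)).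
Let refl := po_refl le_po.
Let trans {x y z : X} (Hxy : le x y) (Hyz : le y z) : le x z := po_trans le_po x y z Hxy Hyz.

Lemma directed_bounded_has_sup {L} b :
  directed le L -> (forall l, L l -> le l b) -> exists p, is_sup le L p.
Proof.
  intros HL Hb. destruct HL as [[l0 Hl0] Hdir].
  pose (A := fun j : X + X => match j with inl l => L l | inr u => forall l, L l -> le l u end).
  pose (U := fun j : X + X => match j with
                              | inl l => fun x => ~ le l x
                              | inr u => fun x => ~ le x u end).
  destruct (compact_fip A U (le_cpt l0 b)) as [p [_ Hp]].
  - intros [l|u] _; [exact (interval_open_not_ge le_po le_bc l)
                    | exact (interval_open_not_le u le_po le_bc)].
  - intros js Hjs.
    assert (Hx : exists x, L x /\ le l0 x /\ forall l, In (inl l) js -> le l x).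
    { induction js as [|j js IH].
      - exists l0. split; [exact Hl0 | split; [apply refl | intros l []]].
      - destruct IH as [x [Lx [Hl0x Hx]]]; [intros j' Hj'; apply Hjs; now right|].
        destruct j as [l|u].
        + destruct (Hdir x l Lx (Hjs (inl l) (or_introl eq_refl))) as [z [Lz [Hxz Hlz]]].
          exists z. split; [exact Lz | split; [exact (trans Hl0x Hxz)|]].
          intros l' [E | Hl']; [injection E as <-; exact Hlz | exact (trans (Hx l' Hl') Hxz)].
        + exists x. split; [exact Lx | split; [exact Hl0x|]].
          intros l' [E | Hl']; [discriminate E | exact (Hx l' Hl')]. }
    destruct Hx as [x [Lx [Hl0x Hx]]].
    exists x. split; [split; [exact Hl0x | exact (Hb x Lx)]|].
    intros [l|u] Hj Hnot; apply Hnot; [exact (Hx l Hj) | exact (Hjs _ Hj x Lx)].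
  - exists p. split.
    + intros l Hl. apply NNPP. exact (Hp (inl l) Hl).
    + intros u Hu. apply NNPP. exact (Hp (inr u) Hu).
Qed.

End BoundedSup.

Lemma filtered_bounded_has_inf {X : Type} {le : X -> X -> Prop} {H} a :
  is_poset le -> bicontinuous le ->
  (forall a b, compact_in (interval_open le) (closed_interval le a b)) ->
  filtered le H -> (forall h, H h -> le a h) -> exists q, is_inf le H q.
Proof.
  intros Hpo Hbc Hcpt.
  assert (Hcpt_dual : forall c d, compact_in (interval_open (dual le)) (closed_interval (dual le) c d)).
  { intros c d. rewrite (interval_open_dual Hbc), closed_interval_dual. apply Hcpt. }
  exact (directed_bounded_has_sup (is_poset_dual Hpo) (bicontinuous_dual Hpo Hbc) Hcpt_dual a).
Qed.

Lemma countable_option_range {T : Type} (g : nat -> option T) :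
  countable_set (fun c => exists n, g n = Some c).
Proof.
  destruct (choice (fun (c : T) (n : nat) => (exists m, g m = Some c) -> g n = Some c))
    as [f Hf].
  { intros c. destruct (classic (exists m, g m = Some c)) as [[m Hm] | Hno].
    - exists m. auto.
    - exists 0. intros Hyes. contradiction. }
  exists f. intros x y Hx Hy Hxy.
  assert (E : Some x = Some y) by (rewrite <- (Hf x Hx), <- (Hf y Hy), Hxy; reflexivity).
  injection E as E. exact E.
Qed.

Lemma second_countable_separable {T : Type} {opn : (T -> Prop) -> Prop} :
  second_countable opn ->
  exists C, countable_set C /\ forall U x, opn U -> U x -> exists c, C c /\ U c.
Proof.
  intros [Bn [_ HB]].
  destruct (choice (fun n (o : option T) => forall x, Bn n x -> exists c, o = Some c /\ Bn n c))
    as [g Hg].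
  { intros n. destruct (classic (exists x, Bn n x)) as [[x Hx] | Hno].
    - exists (Some x). intros _ _. eauto.
    - exists None. intros x Hx. exfalso. eauto. }
  exists (fun c => exists n, g n = Some c). split; [apply countable_option_range|].
  intros U x HU Ux. destruct (HB U x HU Ux) as [n [Hnx HnU]].
  destruct (Hg n x Hnx) as [c [Hc Hnc]]. exists c. split; [exists n; exact Hc | exact (HnU c Hnc)].
Qed.

Section IntervalDomain.
Context {X : Type} {le : X -> X -> Prop}.
Hypotheses (le_po : is_poset le) (le_bc : bicontinuous le)
  (le_cpt : forall a b, compact_in (interval_open le) (closed_interval le a b)).
Local Notation wb := (way_below le).
Local Notation I := (IX le).
Local Notation ile := (IX_le le).
Let refl := po_refl le_po.
Let trans {x y z : X} (Hxy : le x y) (Hyz : le y z) : le x z := po_trans le_po x y z Hxy Hyz.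
Let le_cont : continuous_poset le := proj1 le_bc.

Definition mk_interval {a b : X} (h : le a b) : I := exist _ (a, b) h.

Lemma ilo_le_ihi (i : I) : le (ilo i) (ihi i).
Proof. exact (proj2_sig i). Qed.

Lemma IX_le_iff (i j : I) : ile i j <-> le (ilo i) (ilo j) /\ le (ihi j) (ihi i).
Proof.
  split.
  - intros H. split.
    + apply (H (ilo j)). split; [apply refl | apply ilo_le_ihi].
    + apply (H (ihi j)). split; [apply ilo_le_ihi | apply refl].
  - intros [H1 H2] x [Hx1 Hx2]. split; [exact (trans H1 Hx1) | exact (trans Hx2 H2)].
Qed.

Lemma IX_eq (i j : I) : ilo i = ilo j -> ihi i = ihi j -> i = j.
Proof.
  destruct i as [[a b] p], j as [[c d] q]. unfold ilo, ihi; simpl. intros -> ->.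
  f_equal. apply proof_irrelevance.
Qed.

Lemma IX_poset : is_poset ile.
Proof.
  split.
  - intros i x Hx. exact Hx.
  - intros i j Hij Hji. apply IX_le_iff in Hij, Hji.
    apply IX_eq; apply (po_antisym le_po); tauto.
  - intros i j k Hij Hjk x Hx. exact (Hij x (Hjk x Hx)).
Qed.

Definition lower_ends (S : I -> Prop) : X -> Prop := fun x => exists i, S i /\ ilo i = x.
Definition upper_ends (S : I -> Prop) : X -> Prop := fun x => exists i, S i /\ ihi i = x.

Lemma directed_lower_ends {S} : directed ile S -> directed le (lower_ends S).
Proof.
  intros [[i Hi] HS]. split; [exists (ilo i), i; auto|].
  intros x y [i1 [H1 <-]] [i2 [H2 <-]].
  destruct (HS i1 i2 H1 H2) as [k [Hk [H1k H2k]]].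
  apply IX_le_iff in H1k, H2k. exists (ilo k). split; [exists k; auto | tauto].
Qed.

Lemma filtered_upper_ends {S} : directed ile S -> filtered le (upper_ends S).
Proof.
  intros [[i Hi] HS]. split; [exists (ihi i), i; auto|].
  intros x y [i1 [H1 <-]] [i2 [H2 <-]].
  destruct (HS i1 i2 H1 H2) as [k [Hk [H1k H2k]]].
  apply IX_le_iff in H1k, H2k. exists (ihi k). split; [exists k; auto | tauto].
Qed.

Lemma lower_ends_le_upper_ends {S x y} :
  directed ile S -> lower_ends S x -> upper_ends S y -> le x y.
Proof.
  intros [_ HS] [i1 [H1 <-]] [i2 [H2 <-]].
  destruct (HS i1 i2 H1 H2) as [k [Hk [H1k H2k]]].
  apply IX_le_iff in H1k, H2k.
  exact (trans (proj1 H1k) (trans (ilo_le_ihi k) (proj2 H2k))).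
Qed.

Lemma IX_directed_has_sup {S} : directed ile S ->
  exists p q (hpq : le p q), is_sup le (lower_ends S) p /\ is_inf le (upper_ends S) q /\
                            is_sup ile S (mk_interval hpq).
Proof.
  intros HS. destruct (proj1 HS) as [i0 Hi0].
  destruct (directed_bounded_has_sup le_po le_bc le_cpt (ihi i0) (directed_lower_ends HS))
    as [p Hp].
  { intros l Hl. apply (lower_ends_le_upper_ends HS Hl). exists i0; auto. }
  destruct (filtered_bounded_has_inf (ilo i0) le_po le_bc le_cpt (filtered_upper_ends HS))
    as [q Hq].
  { intros h Hh. apply (lower_ends_le_upper_ends HS); [exists i0; auto | exact Hh]. }
  assert (hpq : le p q).
  { apply (proj2 Hq). intros h Hh. apply (proj2 Hp). intros l Hl.
    exact (lower_ends_le_upper_ends HS Hl Hh). }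
  exists p, q, hpq. split; [exact Hp | split; [exact Hq | split]].
  - intros i Hi. apply IX_le_iff. split.
    + apply (proj1 Hp). exists i; auto.
    + apply (proj1 Hq). exists i; auto.
  - intros u Hu. apply IX_le_iff. split.
    + apply (proj2 Hp). intros l [i [Hi <-]]. exact (proj1 (proj1 (IX_le_iff _ _) (Hu i Hi))).
    + apply (proj2 Hq). intros h [i [Hi <-]]. exact (proj2 (proj1 (IX_le_iff _ _) (Hu i Hi))).
Qed.

Lemma IX_sup_ends {S s} : directed ile S -> is_sup ile S s ->
  is_sup le (lower_ends S) (ilo s) /\ is_inf le (upper_ends S) (ihi s).
Proof.
  intros HS Hs. destruct (IX_directed_has_sup HS) as [p [q [hpq [Hp [Hq Hsup]]]]].
  rewrite (is_sup_unique IX_poset Hs Hsup). split; [exact Hp | exact Hq].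
Qed.

Lemma IX_sup_approx {S s a b} : directed ile S -> is_sup ile S s ->
  wb a (ilo s) -> wb (ihi s) b -> exists d, S d /\ le a (ilo d) /\ le (ihi d) b.
Proof.
  intros HS Hs Ha Hb. destruct (IX_sup_ends HS Hs) as [Hlo Hhi].
  destruct (Ha _ _ (directed_lower_ends HS) Hlo (refl _)) as [l [[i [Hi <-]] Hai]].
  assert (Hb_dual : way_below (dual le) b (ihi s)) by (rewrite (way_below_dual le_bc); exact Hb).
  destruct (Hb_dual _ _ (filtered_upper_ends HS) Hhi (refl _)) as [h [[j [Hj <-]] Hjb]].
  destruct (proj2 HS i j Hi Hj) as [k [Hk [Hik Hjk]]].
  apply IX_le_iff in Hik, Hjk.
  exists k. split; [exact Hk | split; [exact (trans Hai (proj1 Hik)) | exact (trans (proj2 Hjk) Hjb)]].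
Qed.

Lemma IX_directed_of_ends {E F : X -> Prop} {j : I} :
  directed le E -> is_sup le E (ilo j) -> filtered le F -> is_inf le F (ihi j) ->
  directed ile (fun i => E (ilo i) /\ F (ihi i)) /\ is_sup ile (fun i => E (ilo i) /\ F (ihi i)) j.
Proof.
  intros [[e0 He0] HEdir] [HEub HEleast] [[y0 Hy0] HFdir] [HFlb HFgreatest].
  assert (Hef : forall e y, E e -> F y -> le e y).
  { intros e y He Hy. exact (trans (HEub e He) (trans (ilo_le_ihi j) (HFlb y Hy))). }
  split; [split|split].
  - exists (mk_interval (Hef e0 y0 He0 Hy0)). split; assumption.
  - intros i1 i2 [E1 F1] [E2 F2].
    destruct (HEdir _ _ E1 E2) as [e [He [H1 H2]]].
    destruct (HFdir _ _ F1 F2) as [y [Hy [H3 H4]]].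
    exists (mk_interval (Hef e y He Hy)). split; [split; assumption|].
    split; apply IX_le_iff; simpl; auto.
  - intros i [Ei Fi]. apply IX_le_iff. split; [exact (HEub _ Ei) | exact (HFlb _ Fi)].
  - intros u Hu. apply IX_le_iff. split.
    + apply HEleast. intros e He.
      exact (proj1 (proj1 (IX_le_iff _ _) (Hu (mk_interval (Hef e y0 He Hy0)) (conj He Hy0)))).
    + apply HFgreatest. intros y Hy.
      exact (proj2 (proj1 (IX_le_iff _ _) (Hu (mk_interval (Hef e0 y He0 Hy)) (conj He0 Hy)))).
Qed.

Lemma IX_approximants {C} j : way_below_dense le C ->
  let S := fun i => (C (ilo i) /\ wb (ilo i) (ilo j)) /\ (C (ihi i) /\ wb (ihi j) (ihi i)) in
  directed ile S /\ is_sup ile S j.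
Proof.
  intros HC S.
  destruct (way_below_dense_directed_sup le_po le_cont (ilo j) HC) as [HE HEsup].
  destruct (way_below_dense_filtered_inf (ihi j) le_po le_bc HC) as [HF HFinf].
  exact (IX_directed_of_ends HE HEsup HF HFinf).
Qed.

Lemma IX_way_below_iff (i j : I) :
  way_below ile i j <-> wb (ilo i) (ilo j) /\ wb (ihi j) (ihi i).
Proof.
  split.
  - intros Hij. destruct (IX_approximants j (way_below_dense_all le_po le_cont)) as [HS Hsup].
    destruct (Hij _ j HS Hsup (po_refl IX_poset j)) as [k [[[_ Hk1] [_ Hk2]] Hik]].
    apply IX_le_iff in Hik.
    split; [exact (le_way_below_trans le_po (proj1 Hik) Hk1)
          | exact (way_below_le_trans le_po Hk2 (proj2 Hik))].
  - intros [H1 H2] S s HS Hs Hjs. apply IX_le_iff in Hjs.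
    destruct (IX_sup_approx HS Hs (way_below_le_trans le_po H1 (proj1 Hjs))
                (le_way_below_trans le_po (proj2 Hjs) H2)) as [d [Hd Hid]].
    exists d. split; [exact Hd | apply IX_le_iff; exact Hid].
Qed.

Lemma IX_basis_of_dense {C} : way_below_dense le C -> is_basis ile (fun i => C (ilo i) /\ C (ihi i)).
Proof.
  intros HC j. destruct (IX_approximants j HC) as [HS Hsup]. eexists. split; [|exact (conj HS Hsup)].
  intros d [[C1 W1] [C2 W2]]. split; [exact (conj C1 C2) | apply IX_way_below_iff; exact (conj W1 W2)].
Qed.

Lemma IX_domain : domain ile.
Proof.
  split.
  - eexists. exact (IX_basis_of_dense (way_below_dense_all le_po le_cont)).
  - intros S HS. destruct (IX_directed_has_sup HS) as [p [q [hpq [_ [_ Hsup]]]]]. eauto.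
Qed.

Lemma countable_interval_ends {C} : countable_set C -> countable_set (fun i : I => C (ilo i) /\ C (ihi i)).
Proof.
  intros [f Hf]. exists (fun i => Cantor.to_nat (f (ilo i), f (ihi i))).
  intros i j [Ci1 Ci2] [Cj1 Cj2] Hij. apply Cantor.to_nat_inj in Hij. injection Hij as E1 E2.
  apply IX_eq; auto.
Qed.

Lemma second_countable_omega_continuous :
  second_countable (interval_open le) -> omega_continuous ile.
Proof.
  intros Hsc. destruct (second_countable_separable Hsc) as [C [HCcount HCsep]].
  exists (fun i => C (ilo i) /\ C (ihi i)). split.
  - exact (IX_basis_of_dense (way_below_dense_of_separable le_po le_cont HCsep)).
  - exact (countable_interval_ends HCcount).
Qed.

Lemma omega_continuous_second_countable :
  omega_continuous ile -> second_countable (interval_open le).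
Proof.
  intros [B [HB [f Hf]]].
  exists (fun n y => exists i, B i /\ f i = n /\ wb (ilo i) y /\ wb y (ihi i)). split.
  - intros n y [i [Bi [Hfi Hy]]].
    destruct (open_interval_open le_po le_cont (ilo i) (ihi i) y Hy) as [a [b [Hay [Hyb Hab]]]].
    exists a, b. split; [exact Hay | split; [exact Hyb |]].
    intros z Haz Hzb. exists i. auto.
  - intros U x HU Ux. destruct (HU x Ux) as [a [b [Hax [Hxb Hab]]]].
    assert (Hle : le a b) by exact (trans (way_below_le le_po Hax) (way_below_le le_po Hxb)).
    assert (Hwb : way_below ile (mk_interval Hle) (mk_interval (refl x)))
      by (apply IX_way_below_iff; exact (conj Hax Hxb)).
    destruct (basis_way_below IX_poset HB Hwb) as [d [Bd [Had Hdx]]].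
    apply IX_le_iff in Had. apply IX_way_below_iff in Hdx.
    exists (f d). split; [exists d; auto|].
    intros y [i [Bi [Hfi [H1 H2]]]]. rewrite (Hf i d Bi Bd Hfi) in H1, H2.
    apply Hab; [exact (le_way_below_trans le_po (proj1 Had) H1)
              | exact (way_below_le_trans le_po H2 (proj2 Had))].
Qed.

Lemma IX_maximal_iff (i : I) : maximal ile i <-> exists x, i = singleton_interval le_po x.
Proof.
  split.
  - intros Hmax. exists (ilo i).
    assert (Hi : ile i (singleton_interval le_po (ilo i)))
      by (apply IX_le_iff; split; [apply refl | apply ilo_le_ihi]).
    rewrite <- (Hmax _ Hi) at 1. reflexivity.
  - intros [x ->] j Hj. apply IX_le_iff in Hj. destruct Hj as [H1 H2]. simpl in H1, H2.
    pose proof (ilo_le_ihi j) as Hj.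
    apply IX_eq; apply (po_antisym le_po); eauto.
Qed.

(* The trace of the Scott-open set [⋃ {↟[a,b] | (a,b) ⊆ U}] on the singletons is [U]. *)
Lemma interval_open_iff_scott_trace (U : X -> Prop) :
  interval_open le U <->
  exists V, scott_open ile V /\ forall x, U x <-> V (singleton_interval le_po x).
Proof.
  destruct IX_domain as [IX_cont _].
  split.
  - intros HU.
    exists (fun i => exists j, (forall y, wb (ilo j) y -> wb y (ihi j) -> U y) /\ way_below ile j i).
    split; [split|].
    + intros i k [j [Hj Hji]] Hik. exists j. split; [exact Hj | exact (way_below_le_trans IX_poset Hji Hik)].
    + intros S s HS Hs [j [Hj Hjs]].
      destruct (proj2 (scott_open_way_above IX_poset IX_cont j) S s HS Hs Hjs) as [d [Hd Hjd]].
      exists d. split; [exact Hd | exists j; auto].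
    + intros x. split.
      * intros Ux. destruct (HU x Ux) as [a [b [Hax [Hxb Hab]]]].
        exists (mk_interval (trans (way_below_le le_po Hax) (way_below_le le_po Hxb))).
        split; [exact Hab | apply IX_way_below_iff; exact (conj Hax Hxb)].
      * intros [j [Hj Hjx]]. apply IX_way_below_iff in Hjx. exact (Hj x (proj1 Hjx) (proj2 Hjx)).
  - intros [V [[Hup Hscott] HUV]] x Ux. apply HUV in Ux.
    destruct (way_below_directed_sup IX_poset IX_cont (singleton_interval le_po x)) as [HS Hsup].
    destruct (Hscott _ _ HS Hsup Ux) as [d [Hdx Vd]]. apply IX_way_below_iff in Hdx.
    exists (ilo d), (ihi d). split; [exact (proj1 Hdx) | split; [exact (proj2 Hdx) |]].
    intros y Hdy Hyd. apply HUV, (Hup d); [exact Vd|].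
    apply IX_le_iff. split; apply (way_below_le le_po); assumption.
Qed.

End IntervalDomain.

Theorem mainTheorem3 (X : Type) (le : X -> X -> Prop) (Hpo : is_poset le) :
  globally_hyperbolic le ->
  (* IX is a domain *)
  domain (IX_le le) /\
  (* its way-below relation *)
  (forall i j : IX le,
     way_below (IX_le le) i j <-> way_below le (ilo i) (ilo j) /\ way_below le (ihi j) (ihi i)) /\
  (* X has a countable basis iff IX is omega-continuous *)
  (second_countable (interval_open le) <-> omega_continuous (IX_le le)) /\
  (* x |-> [x,x] is a homeomorphism from X onto max(IX) with the relative Scott topology *)
  ((forall x y, singleton_interval Hpo x = singleton_interval Hpo y -> x = y) /\
   (forall i, maximal (IX_le le) i <-> exists x, i = singleton_interval Hpo x) /\
   (forall U : X -> Prop, interval_open le U <->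
      exists V, scott_open (IX_le le) V /\ forall x, U x <-> V (singleton_interval Hpo x))).
Proof.
  intros [_ [Hbc Hcpt]].
  split; [exact (IX_domain Hpo Hbc Hcpt)|].
  split; [exact (IX_way_below_iff Hpo Hbc Hcpt)|].
  split; [split; [apply second_countable_omega_continuous | apply omega_continuous_second_countable];
          assumption|].
  split; [intros x y Hxy; exact (f_equal ilo Hxy)|].
  split; [exact (IX_maximal_iff Hpo) | exact (interval_open_iff_scott_trace Hpo Hbc Hcpt)].
Qed.
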